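(* Let $s,q\in\mathbb N$, $c\in\mathbb R^s$, $C:=\mathrm{diag}(c_1,\dots,c_s)$, and let $K_n\in\mathbb R^{s\times s}$ satisfy $$(c^{l-1})^{\mathsf T}K_n=\mathbb 1^{\mathsf T}K_nC^{l-1},\qquad l=1,\dots,q.$$ Then for every $k\in\mathbb N$ the matrices $V_q^{\mathsf T}K_nV_k$ and $\mathcal L_{q,k}(V_q^{\mathsf T}K_nV_k)$ have Hankel form.
   Context: $\mathbb 1\in\mathbb R^s$ is the all-ones vector; powers of vectors are componentwise. $V_k:=(\mathbb 1,c,\dots,c^{k-1})\in\mathbb R^{s\times k}$, $\tilde E_k:=(i\,\delta_{i+1,j})_{i,j=1}^k$, and $\mathcal L_{q,k}(X):=\tilde E_q^{\mathsf T}X+X\tilde E_k$ for $X\in\mathbb R^{q\times k}$. A matrix $X=(x_{ij})$ has Hankel form if $x_{ij}$ depends only on $i+j$. *)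

From mathcomp Require Import all_boot all_order all_algebra.
Set Implicit Arguments. Unset Strict Implicit. Unset Printing Implicit Defensive.
Import Order.TTheory GRing.Theory Num.Theory.
Local Open Scope ring_scope.

Definition vpow (R : pzRingType) (s : nat) (c : 'cV[R]_s) (l : nat) : 'cV[R]_s :=
  \col_i (c i 0 ^+ l).

Definition Vmx (R : pzRingType) (s : nat) (c : 'cV[R]_s) (k : nat) : 'M[R]_(s, k) :=
  \matrix_(i < s, j < k) (c i 0 ^+ j).

(* tilde E_k = (i delta_{i+1,j})_{i,j=1..k}; 0-indexed: entry (i,j) = i+1 if j = i+1. *)
Definition Etil (R : pzRingType) (k : nat) : 'M[R]_k :=
  \matrix_(i < k, j < k) (if (j == i.+1 :> nat) then (i.+1)%:R else 0).

Definition Lop (R : pzRingType) (q k : nat) (X : 'M[R]_(q, k)) : 'M[R]_(q, k) :=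
  (Etil R q)^T *m X + X *m Etil R k.

Definition hankel (R : pzRingType) (m n : nat) (X : 'M[R]_(m, n)) : Prop :=
  forall (i i' : 'I_m) (j j' : 'I_n), (i + j)%N = (i' + j')%N -> X i j = X i' j'.

(** The row [(c^i)^T K] of [V_q^T K] equals [w C^i] with [w := 1^T K], so the
    [(i, j)] entry of [V_q^T K V_k] is the moment [m_(i+j) := sum_b w_b c_b^(i+j)],
    which depends only on [i + j].  For such a Hankel matrix [X], the operator
    [L_(q,k)] shifts indices down by one and multiplies by the shift position:
    [(E_q^T X)_ij = i m_(i+j-1)] and [(X E_k)_ij = j m_(i+j-1)], so
    [L_(q,k)(X)_ij = (i + j) m_(i+j-1)] is again Hankel. *)

From mathcomp Require Import all_boot all_order all_algebra.
Import Order.TTheory GRing.Theory Num.Theory.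
Local Open Scope ring_scope.

Section HankelOf.

Context {R : comPzRingType}.

Definition hankel_of {m n : nat} (h : nat -> R) (X : 'M[R]_(m, n)) : Prop :=
  forall (i : 'I_m) (j : 'I_n), X i j = h (i + j)%N.

Lemma hankel_ofP {m n : nat} {h : nat -> R} {X : 'M[R]_(m, n)} :
  hankel_of h X -> hankel X.
Proof. by move=> hX i i' j j' eq_ij; rewrite !hX eq_ij. Qed.

Lemma hankel_of_tr {m n : nat} {h : nat -> R} {X : 'M[R]_(m, n)} :
  hankel_of h X -> hankel_of h X^T.
Proof. by move=> hX i j; rewrite mxE hX addnC. Qed.

Lemma mulmx_Etil_hankel_of {m k : nat} {h : nat -> R} {X : 'M[R]_(m, k)} :
  hankel_of h X ->
  forall (i : 'I_m) (j : 'I_k), (X *m Etil R k) i j = j%:R * h (i + j).-1.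
Proof.
move=> hX i [[|j] ltjk]; rewrite mxE /=.
  by rewrite mul0r; apply: big1 => l _; rewrite !mxE mulr0.
rewrite (bigD1 (Ordinal (ltnW ltjk))) //= big1 ?addr0 => [|l neq_l].
  by rewrite !mxE /= eqxx hX addnS mulr_natl mulr_natr.
rewrite !mxE; case: eqP => [[eq_jl]|]; last by rewrite mulr0.
by case/eqP: neq_l; apply: val_inj.
Qed.

Lemma Lop_hankel_of {q k : nat} {h : nat -> R} {X : 'M[R]_(q, k)} :
  hankel_of h X -> hankel_of (fun n => n%:R * h n.-1) (Lop X).
Proof.
move=> hX i j; rewrite /Lop mxE natrD mulrDl.
have -> : (Etil R q)^T *m X = (X^T *m Etil R q)^T by rewrite trmx_mul trmxK.
rewrite [in LHS]mxE.
by rewrite (mulmx_Etil_hankel_of (hankel_of_tr hX)) (mulmx_Etil_hankel_of hX) addnC.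
Qed.

Lemma mulmx_diag_exp_entry (m s : nat) (M : 'M[R]_(m, s)) (d : 'rV[R]_s) n i j :
  (M *m diag_mx d ^+ n) i j = M i j * d 0 j ^+ n.
Proof.
elim: n M => [|n IHn] M; first by rewrite !expr0 mulmx1 mulr1.
by rewrite exprSr -mulmxE mulmxA mul_mx_diag mxE IHn exprSr mulrA.
Qed.

Lemma Vmx_tr_mul_hankel_of {s q : nat} (k : nat) {c : 'cV[R]_s} {K : 'M[R]_s}
    {w : 'rV[R]_s} :
  (forall i : 'I_q, (vpow c i)^T *m K = w *m diag_mx c^T ^+ i) ->
  hankel_of (fun n => (w *m vpow c n) 0 0) ((Vmx c q)^T *m K *m Vmx c k).
Proof.
move=> rowK i j; rewrite !mxE; apply: eq_bigr => b _.
have /(congr1 (fun M : 'M[R]_(1, s) => M 0 b)) := rowK i.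
rewrite mulmx_diag_exp_entry !mxE => rowKb.
rewrite exprD mulrA -rowKb; congr (_ * _); apply: eq_bigr => a _.
by rewrite !mxE.
Qed.

End HankelOf.

Theorem lemma4p4 (R : realFieldType) (s q : nat) (c : 'cV[R]_s) (K : 'M[R]_s) :
  (forall l : nat, (1 <= l <= q)%N ->
     (vpow c l.-1)^T *m K = (const_mx 1 : 'cV[R]_s)^T *m K *m (diag_mx c^T) ^+ l.-1) ->
  forall k : nat,
    hankel ((Vmx c q)^T *m K *m Vmx c k) /\
    hankel (Lop ((Vmx c q)^T *m K *m Vmx c k)).
Proof.
move=> hypK k.
have rowK (i : 'I_q) :
    (vpow c i)^T *m K = (const_mx 1 : 'cV[R]_s)^T *m K *m diag_mx c^T ^+ i.
  by apply: (hypK i.+1); rewrite /= ltn_ord.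
have hX := Vmx_tr_mul_hankel_of k rowK.
by split; [exact: hankel_ofP hX | exact: hankel_ofP (Lop_hankel_of hX)].
Qed.
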